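(* Let $V$ be a finite set with $n=|V|\ge 3$, and let $x=(V,E_x)$ and $y=(V,E_y)$ be two undirected Hamiltonian cycles on $V$. Let $E=E_x\uplus E_y$ be the edge multiset of the 4-regular multigraph $x\cup y$ (an edge lying in both cycles appears as two distinct parallel copies, one from $E_x$ and one from $E_y$); let $c=|E_x\cap E_y|$ be the number of edges common to both cycles, and let $E_x\setminus E_y$ (resp. $E_y\setminus E_x$) denote the copies coming from $x$ (resp. $y$) of edges that do not belong to the other cycle. For $v\in V$ let $E_v\subseteq E$ be the set of edge copies incident to $v$, and for $S\subseteq V$ let $E_S\subseteq E$ be the set of edge copies with both endpoints in $S$. Consider a vector $(x_e)_{e\in E}$ satisfying (1) $\sum_{e\in E}x_e=n$; (2) $\sum_{e\in E_v}x_e=2$ for all $v\in V$; (3) $\sum_{e\in E_x\setminus E_y}x_e\le n-c-2$; (4) $\sum_{e\in E_y\setminus E_x}x_e\le n-c-2$; (5) $\sum_{e\in E_S}x_e\le |S|-1$ for every $S\subsetneq V$ with $|S|\ge 2$; (6) $\sum_{e\in E_S}x_e\ge |E_S|-|S|+1$ for every $S\subsetneq V$ with $|S|\ge 2$; (7) $x_e\in\{0,1\}$ for all $e\in E$. Then a vector $(x_e)_{e\in E}\in\{0,1\}^E$ satisfies (1)–(7) if and only if, setting $z=\{e\in E: x_e=1\}$ and $w=\{e\in E:x_e=0\}$, both $z$ and $w$ are (edge sets of) Hamiltonian cycles on $V$ and the Hamiltonian cycle $z$ is different from both $x$ and $y$ (equivalently, $\{z,w\}$ is a Hamiltonian decomposition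 of $x\cup y$ into two edge-disjoint Hamiltonian cycles different from $x$ and $y$).
   Context: A Hamiltonian decomposition of a regular multigraph is a partition of its edge (multi)set into Hamiltonian cycles. For Hamiltonian cycles $x=(V,E_x)$, $y=(V,E_y)$ on the same vertex set, $x\cup y$ denotes the multigraph $(V,E_x\uplus E_y)$ containing all edges of both cycles (common edges with multiplicity 2). Two Hamiltonian cycles are considered equal if they have the same underlying edge set on $V$. *)

From mathcomp Require Import all_boot all_order all_algebra.
Set Implicit Arguments. Unset Strict Implicit. Unset Printing Implicit Defensive.
Import Order.TTheory GRing.Theory Num.Theory.

(* Undirected edges on V are 2-element subsets {u,v} : {set V}. *)
Definition is_ham_cycle (V : finType) (H : {set {set V}}) : Prop :=
  exists s : seq V,
    [/\ uniq s, (forall v : V, v \in s) & H = [set [set v; next s v] | v : V]].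

(* An edge copy of the multigraph x ∪ y is a pair (b, e): b = true means
   the copy coming from x (e ∈ Ex), b = false the copy coming from y (e ∈ Ey). *)
Definition copy (V : finType) := (bool * {set V})%type.

Definition copies (V : finType) (Ex Ey : {set {set V}}) : {set copy V} :=
  [set p : copy V | p.2 \in (if p.1 then Ex else Ey)].

Definition copies_at (V : finType) (Ex Ey : {set {set V}}) (v : V)
  : {set copy V} := [set p in copies Ex Ey | v \in p.2].

Definition copies_in (V : finType) (Ex Ey : {set {set V}}) (S : {set V})
  : {set copy V} := [set p in copies Ex Ey | p.2 \subset S].

Definition copies_x_only (V : finType) (Ex Ey : {set {set V}}) : {set copy V} :=
  [set p in copies Ex Ey | p.1 && (p.2 \notin Ey)].
Definition copies_y_only (V : finType) (Ex Ey : {set {set V}}) : {set copy V} :=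
  [set p in copies Ex Ey | ~~ p.1 && (p.2 \notin Ex)].

Definition underlying (V : finType) (Z : {set copy V}) : {set {set V}} :=
  [set p.2 | p in Z].

Definition ham_copies (V : finType) (Z : {set copy V}) : Prop :=
  {in Z &, injective (fun p : copy V => p.2)} /\ is_ham_cycle (underlying Z).

From mathcomp Require Import all_boot all_order all_algebra zify.
Import Order.TTheory GRing.Theory Num.Theory.
Set Implicit Arguments. Unset Strict Implicit.

(* The proof rests on a counting characterization of Hamiltonian cycles
   (ham_cycleP): for |V| >= 3, an edge set H is a Hamiltonian cycle iff its
   edges are pairs, |H| = n, every vertex has degree 2, and every proper
   S with |S| >= 2 spans fewer than |S| edges of H.  Necessity follows from
   the cyclic successor function of a cyclic ordering; sufficiency grows a
   simple path until its start vertex has a second neighbour on the path,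
   at which point the subtour bound forces the path to be spanning and the
   degree bound forces it to close.

   For a 0/1 vector, every sum in the constraints counts copies in
   z = {x_e = 1}, and w = {x_e = 0} is its complement in the 4-regular
   multigraph of 2n copies.  Thus (1), (2), (5) say that z has the counts of
   a Hamiltonian cycle and (1), (2), (6) say the same of w.  Finally, the n
   edges of z split into edges own to one cycle, the c common edges (which
   must lie in z, since w has no repeated edge) and edges outside that cycle;
   as two Hamiltonian cycles cannot differ in a single edge, (3) and (4) say
   exactly that z differs from x and from y. *)

Section NextInCycle.
Variables (T : finType) (p : seq T).
Hypothesis Up : uniq p.

Lemma next_rotated x : x \in p ->
  exists2 q, uniq (x :: q) /\ size q = (size p).-1 & next p =1 next (x :: q).
Proof.
case/rot_to=> i q Ep; exists q; last by move=> y; rewrite -(next_rot i Up) Ep.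
by rewrite -Ep rot_uniq -(size_rot i p) Ep.
Qed.

(* On at least two (resp. three) points, next has no fixed point (resp. no
   2-cycle); this makes the cycle edges genuine and pairwise distinct. *)
Lemma next_neq x : x \in p -> (2 <= size p)%N -> next p x != x.
Proof.
case/next_rotated=> q [Uq Sq] Nx s2; rewrite Nx {Nx}; case: q Uq Sq => [|y q] /andP[xq _] Sq.
  by move: Sq s2 => /=; lia.
by rewrite /= eqxx; apply: contraNneq xq => ->; rewrite mem_head.
Qed.

Lemma next_next_neq x : x \in p -> (3 <= size p)%N -> next p (next p x) != x.
Proof.
case/next_rotated=> q [Uq Sq] Nx s3; rewrite !Nx {Nx}.
case: q Uq Sq => [|y [|z q]] /= Uq Sq; try by move: Sq s3; lia.
move: Uq; rewrite !inE !negb_or => /andP[/andP[xy /andP[xz _]] _].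
have yx : (y == x) = false by rewrite eq_sym (negPf xy).
by rewrite /= eqxx /= yx eqxx eq_sym.
Qed.

Lemma next_closed (P : pred T) x : x \in p -> P x ->
  (forall v, P v -> P (next p v)) -> forall y, y \in p -> P y.
Proof.
move=> xp Px clP y yp.
have /connectP[r] := connect_cycle (cycle_next Up) xp yp.
elim: r x {xp} Px => [|v r IH] x Px /=; first by move=> _ ->.
by case/andP=> /eqP <-; apply: IH; apply: clP.
Qed.

End NextInCycle.

Section EdgeSetCounts.
Variables (V : finType) (H : {set {set V}}).

Definition degree (v : V) : nat := #|[set e in H | v \in e]|.

Definition inner_count (S : {set V}) : nat := #|[set e in H | e \subset S]|.

Definition ham_edge_set : Prop :=
  [/\ forall e, e \in H -> #|e| = 2, #|H| = #|V|, forall v, degree v = 2 &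
      forall S : {set V}, S \proper [set: V] -> (1 < #|S|)%N ->
        (inner_count S < #|S|)%N].

End EdgeSetCounts.

Definition cycle_edges (V : finType) (s : seq V) : {set {set V}} :=
  [set [set v; next s v] | v : V].

Section CycleEdges.
Variables (V : finType) (s : seq V).
Hypotheses (Us : uniq s) (Ts : forall v, v \in s) (n3 : (3 <= #|V|)%N).

Lemma size_cycle : size s = #|V|.
Proof. by rewrite -(card_uniqP Us); apply: eq_card => v; rewrite Ts. Qed.

Let s3 : (3 <= size s)%N. Proof. by rewrite size_cycle. Qed.

Lemma cycle_edge_card e : e \in cycle_edges s -> #|e| = 2.
Proof.
by case/imsetP=> v _ ->; rewrite cards2 eq_sym (next_neq Us (Ts v) (ltnW s3)).
Qed.

Lemma cycle_edge_inj : injective (fun v => [set v; next s v]).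
Proof.
move=> u v Euv; have : u \in [set v; next s v] by rewrite -Euv set21.
case/set2P=> // Eu; have : next s u \in [set v; next s v] by rewrite -Euv set22.
rewrite Eu => /set2P[] /eqP.
- by rewrite (negPf (next_next_neq Us (Ts v) s3)).
- by rewrite (negPf (next_neq Us (Ts _) (ltnW s3))).
Qed.

Lemma cycle_edges_card : #|cycle_edges s| = #|V|.
Proof. exact/card_imset/cycle_edge_inj. Qed.

(* The two edges at v join it to its predecessor and to its successor. *)
Lemma cycle_edges_degree v : degree (cycle_edges s) v = 2.
Proof.
rewrite /degree.
have -> : [set e in cycle_edges s | v \in e] = [set [set v; next s v]; [set prev s v; v]].
  apply/setP=> e; rewrite !inE; apply/andP/orP.
    case=> /imsetP[u _ ->] /set2P[]->; first by left.
    by right; rewrite prev_next.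
  case=> /eqP->; split; rewrite ?set21 ?set22 //; first exact: imset_f.
  by apply/imsetP; exists (prev s v) => //; rewrite next_prev.
rewrite cards2; suff -> : [set v; next s v] != [set prev s v; v] by [].
apply/negP=> /eqP Eedge.
have /set2P[Enext|Enext] : next s v \in [set prev s v; v] by rewrite -Eedge set22.
- by have := next_next_neq Us (Ts v) s3; rewrite Enext next_prev // eqxx.
- by have := next_neq Us (Ts v) (ltnW s3); rewrite Enext eqxx.
Qed.

(* A proper nonempty S is not closed under next, so some vertex of S does
   not contribute its successor edge to the edges inside S. *)
Lemma cycle_edges_inner (S : {set V}) : S \proper [set: V] -> (0 < #|S|)%N ->
  (inner_count (cycle_edges s) S < #|S|)%N.
Proof.
rewrite /inner_count => PS /card_gt0P[x xS].
set A := [set v in S | next s v \in S].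
have sub : [set e in cycle_edges s | e \subset S] \subset [set [set v; next s v] | v in A].
  apply/subsetP=> e; rewrite inE => /andP[/imsetP[v _ ->] sS].
  by apply: imset_f; rewrite inE !(subsetP sS) ?set21 ?set22.
apply: leq_trans (proper_card _).
  exact: leq_trans (subset_leq_card sub) (leq_imset_card _ _).
rewrite properE; apply/andP; split; first by apply/subsetP=> v; rewrite inE => /andP[].
apply: contraL PS => SA; rewrite properT negbK eqEsubset subsetT /=.
apply/subsetP=> y _; apply: (next_closed Us (Ts x) xS) => // v vS.
by have := subsetP SA v vS; rewrite inE => /andP[].
Qed.

Lemma cycle_edges_ham : ham_edge_set (cycle_edges s).
Proof.
split; [exact: cycle_edge_card | exact: cycle_edges_card | exact: cycle_edges_degree |].
by move=> S PS S2; apply: cycle_edges_inner => //; apply: ltnW.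
Qed.

End CycleEdges.

Definition path_edges (V : finType) (x : V) (q : seq V) : seq {set V} :=
  pairmap (fun a b => [set a; b]) x q.

Section PathEdges.
Variable V : finType.
Implicit Types (x : V) (q : seq V) (g : {set V}).

Lemma path_edges_sub x q g : g \in path_edges x q -> g \subset [set v in x :: q].
Proof.
elim: q x => [|y q IH] x //=; rewrite inE => /orP[/eqP->|/IH sub].
  by apply/subsetP=> v /set2P[]->; rewrite !inE eqxx ?orbT.
by apply: subset_trans sub _; apply/subsetP=> v; rewrite !inE => ->; rewrite orbT.
Qed.

Lemma path_edges_uniq x q : uniq (x :: q) -> uniq (path_edges x q).
Proof.
elim: q x => [|y q IH] x //= /andP[xq /andP[yq Uq]].
rewrite IH /= ?yq ?Uq // andbT; apply/negP=> /path_edges_sub /subsetP /(_ x (set21 _ _)).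
by rewrite inE (negPf xq).
Qed.

Lemma path_edges_start x q g : uniq (x :: q) -> g \in path_edges x q -> x \in g ->
  g = [set x; head x q].
Proof.
case: q => [|y q] //= /andP[xq _]; rewrite inE => /orP[/eqP->//|/path_edges_sub /subsetP sub].
by move/sub; rewrite inE (negPf xq).
Qed.

Lemma path_edges_end x q : uniq (x :: q) -> q != [::] ->
  count (fun g => last x q \in g) (path_edges x q) = 1.
Proof.
elim: q x => [|y q IH] x // Uq _; case: q IH Uq => [|z q] IH Uq; first by rewrite /= set22.
move: Uq; rewrite [uniq _]/= => /andP[xq Uq].
rewrite [path_edges _ _]/= [count _ _]/=; have /= -> := IH y Uq isT.
have lq : last z q \in z :: q by apply: mem_last.
suff -> : (last z q \in [set x; y]) = false by [].
apply/negP=> /set2P[] E; first by move: xq; rewrite -E inE lq orbT.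
by move: Uq => /andP[]; rewrite -E lq.
Qed.

Lemma closed_path_edges_card x q g : uniq (x :: q) -> g \notin path_edges x q ->
  #|[set h in g :: path_edges x q]| = size (x :: q).
Proof.
move=> Up gL; rewrite cardsE (card_uniqP _) /= ?size_pairmap //.
by rewrite gL path_edges_uniq.
Qed.

End PathEdges.

Section HamFromCounts.
Variables (V : finType) (Z : {set {set V}}).
Hypotheses (n3 : (3 <= #|V|)%N) (Z2 : forall e, e \in Z -> #|e| = 2)
  (Zc : #|Z| = #|V|) (Zd : forall v, degree Z v = 2)
  (Zs : forall S : {set V}, S \proper [set: V] -> (1 < #|S|)%N ->
          (inner_count Z S < #|S|)%N).

Definition adjacent : rel V := fun a b => [set a; b] \in Z.

Lemma path_edges_in x q g : path adjacent x q -> g \in path_edges x q -> g \in Z.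
Proof.
elim: q x => [|y q IH] x //= /andP[Axy Pq]; rewrite inE => /orP[/eqP->//|].
exact: IH.
Qed.

(* Degree 2 gives every vertex a neighbour other than any prescribed one. *)
Lemma other_neighbour x a :
  exists2 u, u != x & adjacent x u && ([set x; u] != [set x; a]).
Proof.
have [e eD ne] : exists2 e, e \in [set e in Z | x \in e] & e != [set x; a].
  case: (pickP [pred e in [set e in Z | x \in e] | e != [set x; a]]) => [e /andP[]|none].
    by exists e.
  have : [set e in Z | x \in e] \subset [set [set x; a]].
    by apply/subsetP=> g gD; have := none g; rewrite /= gD inE => /negbFE.
  by move/subset_leq_card; rewrite cards1 -/(degree Z x) Zd.
move: eD; rewrite inE => /andP[eZ xe].
have /cards1P[u eu] : #|e :\ x| == 1 by move: (cardsD1 x e); rewrite xe Z2 //; lia.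
have ux : u != x by have := set11 u; rewrite -eu !inE => /andP[].
have ee : e = [set x; u] by rewrite -eu setD1K.
by exists u => //; rewrite /adjacent -ee eZ ne.
Qed.

Section ClosingEdge.
Variables (x u : V) (q : seq V).
Hypotheses (Up : uniq (x :: q)) (Pp : path adjacent x q) (uq : u \in q)
  (Axu : adjacent x u) (new : [set x; u] \notin path_edges x q).

Let q_nonempty : q != [::]. Proof. by apply: contraTneq uq => ->. Qed.

Let closing := [set g in [set x; u] :: path_edges x q].

Let closing_sub : closing \subset Z.
Proof.
by apply/subsetP=> g; rewrite inE => /orP[/eqP->//|]; apply: path_edges_in.
Qed.

(* The path with its closing edge carries as many edges as vertices, so the
   subtour bound forces the path to visit every vertex. *)
Lemma closing_edge_spans v : v \in x :: q.
Proof.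
set S := [set v in x :: q].
suff /eqP ST : S == [set: V] by move: (in_setT v); rewrite -ST inE.
apply: contraT; rewrite -properT => PS.
have cS : #|S| = size (x :: q) by rewrite cardsE (card_uniqP Up).
have S2 : (1 < #|S|)%N by rewrite cS ltnS lt0n size_eq0.
have : (#|closing| <= inner_count Z S)%N.
  apply: subset_leq_card; apply/subsetP=> g gC; rewrite inE (subsetP closing_sub) //=.
  move: gC; rewrite inE => /orP[/eqP->|/path_edges_sub//].
  by apply/subsetP=> w /set2P[]->; rewrite inE ?mem_head // mem_behead.
by rewrite /closing closed_path_edges_card // -cS leqNgt Zs.
Qed.

Lemma closing_edge_cycle : is_ham_cycle Z.
Proof.
have sizep : size (x :: q) = #|V| by apply: size_cycle Up closing_edge_spans.
have ZC : Z = closing.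
  apply/eqP; rewrite eq_sym eqEcard closing_sub Zc -sizep /closing.
  by rewrite (closed_path_edges_card Up new) leqnn.
set y := last x q.
have yq : y \in q by rewrite /y; case: q q_nonempty {ZC sizep} => //= z r _; exact: mem_last.
have yxu : y \in [set x; u].
  have := Zd y; rewrite /degree ZC.
  have -> : [set g in closing | y \in g] =
            [set g in filter (fun g : {set V} => y \in g) ([set x; u] :: path_edges x q)].
    by apply/setP=> g; rewrite !inE mem_filter andbC.
  rewrite cardsE (card_uniqP (filter_uniq _ _)) ?size_filter /= ?path_edges_end //.
  - by case: (y \in _).
  - by rewrite /= new path_edges_uniq.
have yu : y = u.
  by move: yxu => /set2P[] // yx; move: Up; rewrite /= -yx yq.
have Cp : cycle adjacent (x :: q) by rewrite /= rcons_path Pp -/y yu /adjacent setUC.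
exists (x :: q); split=> //; first exact: closing_edge_spans.
apply/eqP; rewrite eq_sym eqEcard; apply/andP; split.
  by apply/subsetP=> g /imsetP[v _ ->]; apply: (next_cycle Cp (closing_edge_spans v)).
by rewrite (cycle_edges_card Up closing_edge_spans n3) Zc.
Qed.

End ClosingEdge.

Lemma extend_or_close x q : uniq (x :: q) -> path adjacent x q ->
  (exists2 u, u \notin x :: q & adjacent u x) \/ is_ham_cycle Z.
Proof.
move=> Up Pp; have [u ux /andP[Axu ne]] := other_neighbour x (head x q).
have Aux : adjacent u x by rewrite /adjacent setUC.
case: (boolP (u \in x :: q)) => uin; last by left; exists u.
have uq : u \in q by move: uin; rewrite inE (negPf ux).
right; apply: (closing_edge_cycle Up Pp uq Axu).
by apply/negP=> /(path_edges_start Up)/(_ (set21 _ _)) E; rewrite E eqxx in ne.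
Qed.

(* Growing a simple path from any vertex must stop with a Hamiltonian cycle. *)
Lemma ham_of_counts : is_ham_cycle Z.
Proof.
have /card_gt0P[x0 _] : (0 < #|V|)%N by apply: leq_trans n3.
suff grow d x q : (#|V| - size q = d)%N -> uniq (x :: q) -> path adjacent x q ->
    is_ham_cycle Z.
  exact: (grow _ x0 [::] erefl).
elim: d x q => [|d IH] x q Hd Up Pp; case: (extend_or_close Up Pp) => // -[u un Aux].
- have : uniq (u :: x :: q) by rewrite /= un.
  have Vq : (#|V| <= (size q).+1)%N by apply: leqW; rewrite -subn_eq0 Hd.
  by move/card_uniqP => cu; have := max_card (mem (u :: x :: q)); rewrite cu /= ltnNge Vq.
- by apply: (IH u (x :: q)); rewrite /= ?Aux ?Pp ?un // subnS Hd.
Qed.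

End HamFromCounts.

Lemma ham_cycleP (V : finType) (H : {set {set V}}) :
  (3 <= #|V|)%N -> is_ham_cycle H <-> ham_edge_set H.
Proof.
move=> n3; split=> [[s [Us Ts ->]]|[]]; first exact: cycle_edges_ham.
exact: ham_of_counts.
Qed.

Lemma degree_one_off (V : finType) (H K : {set {set V}}) (f : {set V}) v :
  H :\: K = [set f] -> degree H v = (#|[set g in H :&: K | v \in g]| + (v \in f))%N.
Proof.
move=> HKf; rewrite /degree -(cardsID K [set g in H | v \in g]); congr (_ + _)%N.
  by apply: eq_card => g; rewrite !inE andbAC.
have -> : [set g in H | v \in g] :\: K = [set g in [set f] | v \in g].
  by rewrite -HKf; apply/setP=> g; rewrite !inE andbA.
have -> : [set g in [set f] | v \in g] = if v \in f then [set f] else set0.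
  apply/setP=> g; rewrite !inE.
  by case: (eqVneq g f) => [->|ne]; case: (v \in f); rewrite !inE ?eqxx ?(negPf ne).
by case: (v \in f); rewrite ?cards1 ?cards0.
Qed.

(* Two Hamiltonian cycles differing in at most one edge coincide: swapping a
   single edge would change the degree of one of its endpoints. *)
Lemma ham_cycle_eq (V : finType) (H1 H2 : {set {set V}}) : (3 <= #|V|)%N ->
  is_ham_cycle H1 -> is_ham_cycle H2 -> (#|H1 :\: H2| <= 1)%N -> H1 = H2.
Proof.
move=> n3 /(ham_cycleP _ n3)[e1 c1 d1 _] /(ham_cycleP _ n3)[e2 c2 d2 _].
case: (posnP #|H1 :\: H2|) => [/eqP|pos le1].
  rewrite cards_eq0 setD_eq0 => sub _.
  by apply/eqP; rewrite eqEcard sub c1 c2 leqnn.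
have /cards1P[f Ef] : #|H1 :\: H2| == 1 by rewrite eqn_leq le1.
have /cards1P[e Ee] : #|H2 :\: H1| == 1 by rewrite cardsD c2 -c1 setIC -cardsD Ef cards1.
have : f \in H1 :\: H2 by rewrite Ef set11.
rewrite inE => /andP[fH2 _].
have : e \in H2 :\: H1 by rewrite Ee set11.
rewrite inE => /andP[_ eH2].
suff ef : e = f by move: fH2; rewrite -ef eH2.
apply/setP=> v; have := d1 v; rewrite (degree_one_off v Ef) -(d2 v).
by rewrite (degree_one_off v Ee) setIC => /addnI; case: (v \in e); case: (v \in f).
Qed.

Lemma count_underlying (V : finType) (Z : {set copy V}) (Q : pred {set V}) :
  {in Z &, injective snd} ->
  #|[set f in underlying Z | Q f]| = #|[set p in Z | Q p.2]|.
Proof.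
move=> inj; have -> : [set f in underlying Z | Q f] = snd @: [set p in Z | Q p.2].
  apply/setP=> f; rewrite inE; apply/andP/imsetP => [[/imsetP[p pZ ->] Qp]|[p]].
    by exists p; rewrite ?inE ?pZ.
  by rewrite inE => /andP[pZ Qp] ->; split; first exact: imset_f.
by rewrite card_in_imset // => p q; rewrite !inE => /andP[pZ _] /andP[qZ _]; apply: inj.
Qed.

Lemma sep_true (T : finType) (A : {set T}) : [set a in A | true] = A.
Proof. by apply/setP=> a; rewrite inE andbT. Qed.

Section Decomposition.
Variables (V : finType) (Ex Ey : {set {set V}}) (X : copy V -> int).
Hypotheses (n3 : (3 <= #|V|)%N) (hx : is_ham_cycle Ex) (hy : is_ham_cycle Ey)
  (X01 : forall e, e \in copies Ex Ey -> X e = 0%R \/ X e = 1%R).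

Local Notation E := (copies Ex Ey).
Local Notation z := [set e in copies Ex Ey | X e == 1%R].
Local Notation w := [set e in copies Ex Ey | X e == 0%R].

Definition side (b : bool) : {set {set V}} := if b then Ex else Ey.

Lemma side_ham b : ham_edge_set (side b).
Proof. by apply/ham_cycleP; case: b. Qed.

Lemma copy_edge_card p : p \in E -> #|p.2| = 2.
Proof. by rewrite inE; case: (side_ham p.1) => + _ _ _; apply. Qed.

Lemma count_copies (P : pred {set V}) :
  #|[set p in E | P p.2]| = (#|[set f in Ex | P f]| + #|[set f in Ey | P f]|)%N.
Proof.
have inj b : injective (pair b : {set V} -> copy V) by move=> f g [].
have mem_pair b b' f (A : {set {set V}}) : ((b', f) \in pair b @: A) = (b' == b) && (f \in A).
  by apply/imsetP/andP => [[g gA [-> ->]]|[/eqP-> fA]]; [rewrite eqxx | exists f].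
rewrite -(cardsID [set p : copy V | p.1]) -(card_imset [set f in Ex | P f] (inj true)).
rewrite -(card_imset [set f in Ey | P f] (inj false)).
by congr (_ + _)%N; apply: eq_card => -[[] f]; rewrite mem_pair !inE /= ?andbT ?andbF.
Qed.

Lemma card_copies : #|E| = (#|V| + #|V|)%N.
Proof.
have := count_copies (fun _ => true); rewrite !sep_true => ->.
by case: (side_ham true) => _ -> _ _; case: (side_ham false) => _ -> _ _.
Qed.

Lemma degree_copies v : #|[set p in E | v \in p.2]| = 4.
Proof.
rewrite (count_copies (fun f => v \in f)).
case: (side_ham true) => _ _ dx _; case: (side_ham false) => _ _ dy _.
by have := dx v; have := dy v; rewrite /degree /= => -> ->.
Qed.

(* The subtour bound for S = {u, v} forbids taking both copies of a double edge. *)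
Lemma copies_inj_of_subtour (Z : {set copy V}) : Z \subset E ->
  (forall S : {set V}, S \proper [set: V] -> (1 < #|S|)%N ->
     (#|[set p in Z | p.2 \subset S]| < #|S|)%N) -> {in Z &, injective snd}.
Proof.
move=> ZE sub p q pZ qZ epq; apply/eqP; apply: contraT => npq.
have c2 := copy_edge_card (subsetP ZE p pZ).
have PS : p.2 \proper [set: V].
  by rewrite properT; apply: contraTneq n3 => ET; rewrite -cardsT -ET c2.
have : [set p; q] \subset [set r in Z | r.2 \subset p.2].
  by apply/subsetP=> r /set2P[]->; rewrite inE ?pZ ?qZ //= -?epq subxx.
have := sub _ PS; rewrite c2 => /(_ isT) lt2.
by move/subset_leq_card; rewrite cards2 npq => /leq_ltn_trans/(_ lt2); rewrite ltnn.
Qed.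

Lemma ham_copiesP (Z : {set copy V}) : Z \subset E ->
  ham_copies Z <->
  [/\ #|Z| = #|V|, forall v, #|[set p in Z | v \in p.2]| = 2 &
      forall S : {set V}, S \proper [set: V] -> (1 < #|S|)%N ->
        (#|[set p in Z | p.2 \subset S]| < #|S|)%N].
Proof.
move=> ZE; split=> [[inj /(ham_cycleP _ n3)[_ c d sub]]|[c d sub]].
  split; first by rewrite -c card_in_imset.
    by move=> v; rewrite -(count_underlying (fun f => v \in f) inj); apply: d.
  by move=> S PS S2; rewrite -(count_underlying (fun f => f \subset S) inj); apply: sub.
have inj := copies_inj_of_subtour ZE sub.
split=> //; apply/(ham_cycleP _ n3); split.
- by move=> e /imsetP[p pZ ->]; apply/copy_edge_card/(subsetP ZE).
- by rewrite card_in_imset.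
- by move=> v; rewrite /degree (count_underlying (fun f => v \in f) inj).
- move=> S PS S2; rewrite /inner_count (count_underlying (fun f => f \subset S) inj).
  exact: sub.
Qed.

Lemma count_z_w (Q : pred (copy V)) :
  #|[set p in z | Q p]| + #|[set p in w | Q p]| = #|[set p in E | Q p]|.
Proof.
rewrite -[RHS](cardsID [set p | X p == 1%R]); congr (_ + _); apply: eq_card => p.
  by rewrite !inE andbAC andbC.
have := @X01 p; rewrite !inE; case: (_ \in _) => //=; last by rewrite andbF.
by case=> // ->.
Qed.

Lemma z_sub : z \subset E.
Proof. by apply/subsetP=> p; rewrite inE => /andP[]. Qed.

Lemma w_sub : w \subset E.
Proof. by apply/subsetP=> p; rewrite inE => /andP[]. Qed.

(* An edge common to x and y cannot have both of its copies in the
   duplicate-free set w, so it is an edge of z. *)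
Lemma common_edge_in_z f : {in w &, injective snd} -> f \in Ex :&: Ey ->
  f \in underlying z.
Proof.
move=> injw; rewrite inE => /andP[fx fy].
have tE : (true, f) \in E by rewrite inE.
have fE : (false, f) \in E by rewrite inE.
have inz p : p \in z -> p.2 \in underlying z by move=> pz; apply: imset_f.
case: (X01 tE) => Xt; last by apply: (inz (true, f)); rewrite inE tE Xt.
case: (X01 fE) => Xf; last by apply: (inz (false, f)); rewrite inE fE Xf.
have eqtf : (true, f) = (false, f) by apply: injw => //; rewrite inE ?tE ?fE ?Xt ?Xf.
by move: eqtf => [].
Qed.

Definition own_copy (b : bool) (p : copy V) : bool :=
  (p.1 == b) && (p.2 \notin side (~~ b)).

Lemma z_partition b : {in z &, injective snd} -> {in w &, injective snd} ->
  #|z| = #|V| ->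
  #|[set p in z | own_copy b p]| + #|Ex :&: Ey| + #|underlying z :\: side b| = #|V|.
Proof.
move=> injz injw cz.
have common : #|[set p in z | p.2 \in Ex :&: Ey]| = #|Ex :&: Ey|.
  rewrite -(count_underlying (fun f => f \in Ex :&: Ey) injz).
  by apply: eq_card => f; rewrite inE andb_idl // => /(common_edge_in_z injw).
have rest : #|[set p in z | p.2 \notin side b]| = #|underlying z :\: side b|.
  rewrite -(count_underlying (fun f => f \notin side b) injz).
  by apply: eq_card=> f; rewrite !inE andbC.
rewrite [_ + #|Ex :&: Ey|]addnC -common -rest -[RHS]cz.
rewrite -[RHS](cardsID [set p | p.2 \in side b] z).
rewrite -(cardsID [set p | p.2 \in side (~~ b)] (z :&: [set p | p.2 \in side b])).
clear common rest; congr (_ + _ + _); apply: eq_card => -[b' f].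
all: rewrite !inE /own_copy /side /=.
all: by case: b; case: b'; case: (f \in Ex); case: (f \in Ey); rewrite /= ?andbT ?andbF.
Qed.

Local Open Scope ring_scope.

Lemma sum_count (Q : pred (copy V)) :
  \sum_(p in [set p in E | Q p]) X p = #|[set p in z | Q p]|%:Z.
Proof.
rewrite (bigID (fun p => X p == 1)) /= [X in _ + X]big1; last first.
  by move=> p /andP[]; rewrite inE => /andP[/X01[]->].
rewrite addr0 (eq_bigr (fun _ => 1)); last by move=> p /andP[_ /eqP].
rewrite -big_set /= sumr_const natz; congr Posz.
by apply: eq_card => p; rewrite !inE andbAC.
Qed.

Lemma sum_total : \sum_(p in E) X p = #|z|%:Z.
Proof. by have := sum_count (fun _ => true); rewrite !sep_true. Qed.

Definition copies_only (b : bool) : {set copy V} :=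
  if b then copies_x_only Ex Ey else copies_y_only Ex Ey.

Lemma sum_only b : \sum_(p in copies_only b) X p = #|[set p in z | own_copy b p]|%:Z.
Proof.
have -> : copies_only b = [set p in E | own_copy b p].
  by apply/setP=> -[b' f]; case: b; case: b'; rewrite !inE /own_copy /= ?andbF.
exact: sum_count.
Qed.

(* Constraints (3)/(4): z takes at most n - c - 2 edges own to side b exactly
   when z differs from that cycle, since two Hamiltonian cycles cannot differ
   in a single edge. *)
Lemma bound_only_side b : ham_copies z -> ham_copies w ->
  \sum_(p in copies_only b) X p <= #|V|%:Z - #|Ex :&: Ey|%:Z - 2 <->
  underlying z <> side b.
Proof.
move=> hz hw; have [cz _ _] := (ham_copiesP z_sub).1 hz.
have part := z_partition b hz.1 hw.1 cz; rewrite sum_only.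
split=> [le Uz|ne]; first by move: part; rewrite Uz setDv cards0; lia.
have : (1 < #|underlying z :\: side b|)%N.
  rewrite ltnNge; apply/negP=> le1; apply: ne.
  by apply: ham_cycle_eq n3 hz.2 _ le1; apply/(ham_cycleP _ n3)/side_ham.
lia.
Qed.

Lemma z_ham_of_constraints :
  \sum_(p in E) X p = #|V|%:Z ->
  (forall v, \sum_(p in copies_at Ex Ey v) X p = 2) ->
  (forall S : {set V}, S \proper [set: V] -> (2 <= #|S|)%N ->
     \sum_(p in copies_in Ex Ey S) X p <= #|S|%:Z - 1) ->
  ham_copies z.
Proof.
move=> total deg sub; apply/(ham_copiesP z_sub); split.
- by move: total; rewrite sum_total => -[].
- by move=> v; move: (deg v); rewrite /copies_at sum_count => -[].
- by move=> S PS S2; move: (sub S PS S2); rewrite /copies_in sum_count; lia.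
Qed.

(* Constraints (1), (2), (6) say the same of the complement w, since x ∪ y has
   2n copies and is 4-regular. *)
Lemma w_ham_of_constraints :
  \sum_(p in E) X p = #|V|%:Z ->
  (forall v, \sum_(p in copies_at Ex Ey v) X p = 2) ->
  (forall S : {set V}, S \proper [set: V] -> (2 <= #|S|)%N ->
     \sum_(p in copies_in Ex Ey S) X p >= #|copies_in Ex Ey S|%:Z - #|S|%:Z + 1) ->
  ham_copies w.
Proof.
move=> total deg sub; apply/(ham_copiesP w_sub); split.
- move: total; rewrite sum_total => -[cz].
  by have := count_z_w (fun _ => true); rewrite !sep_true card_copies cz => /addnI.
- move=> v; move: (deg v); rewrite /copies_at sum_count => -[] /= dz.
  by have /= := count_z_w (fun p => v \in p.2); rewrite degree_copies dz; lia.
- move=> S PS S2; move: (sub S PS S2); rewrite /copies_in sum_count.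
  by have /= := count_z_w (fun p => p.2 \subset S); lia.
Qed.

Lemma constraints_of_decomposition : ham_copies z -> ham_copies w ->
  [/\ \sum_(p in E) X p = #|V|%:Z,
      forall v, \sum_(p in copies_at Ex Ey v) X p = 2,
      forall S : {set V}, S \proper [set: V] -> (2 <= #|S|)%N ->
        \sum_(p in copies_in Ex Ey S) X p <= #|S|%:Z - 1 &
      forall S : {set V}, S \proper [set: V] -> (2 <= #|S|)%N ->
        \sum_(p in copies_in Ex Ey S) X p >= #|copies_in Ex Ey S|%:Z - #|S|%:Z + 1].
Proof.
move=> /(ham_copiesP z_sub)[cz dz sz] /(ham_copiesP w_sub)[_ _ sw]; split.
- by rewrite sum_total cz.
- by move=> v; rewrite /copies_at sum_count dz.
- by move=> S PS S2; rewrite /copies_in sum_count; have := sz S PS S2; lia.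
- move=> S PS S2; rewrite /copies_in sum_count; have := sw S PS S2.
  by have /= := count_z_w (fun p => p.2 \subset S); lia.
Qed.

End Decomposition.

Unset Implicit Arguments.
Local Open Scope ring_scope.
Theorem mainTheorem1 (V : finType) (Ex Ey : {set {set V}})
    (X : copy V -> int) :
  (3 <= #|V|)%N ->
  is_ham_cycle Ex -> is_ham_cycle Ey ->
  (forall e, e \in copies Ex Ey -> X e = 0 \/ X e = 1) ->
  let E := copies Ex Ey in
  let n := #|V| in
  let c := #|Ex :&: Ey| in
  ( (* (1) *) \sum_(e in E) X e = n%:Z /\
        (* (2) *) (forall v : V, \sum_(e in copies_at Ex Ey v) X e = 2) /\
        (* (3) *) \sum_(e in copies_x_only Ex Ey) X e <= n%:Z - c%:Z - 2 /\
        (* (4) *) \sum_(e in copies_y_only Ex Ey) X e <= n%:Z - c%:Z - 2 /\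
        (* (5) *) (forall S : {set V}, S \proper [set: V] -> (2 <= #|S|)%N ->
                     \sum_(e in copies_in Ex Ey S) X e <= #|S|%:Z - 1) /\
        (* (6) *) (forall S : {set V}, S \proper [set: V] -> (2 <= #|S|)%N ->
                     \sum_(e in copies_in Ex Ey S) X e
                       >= #|copies_in Ex Ey S|%:Z - #|S|%:Z + 1) /\
      (* (7) *) (forall e, e \in E -> X e = 0 \/ X e = 1) )
  <->
    let z := [set e in E | X e == 1] in
    let w := [set e in E | X e == 0] in
    [/\ ham_copies z, ham_copies w, underlying z <> Ex & underlying z <> Ey].
Proof.
move=> n3 hx hy X01 E n c.
have bound b := bound_only_side n3 hx hy X01 b.
split.
- case=> total [deg [bound_x [bound_y [sub [cosub _]]]]].
  have hz := z_ham_of_constraints n3 hx hy X01 total deg sub.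
  have hw := w_ham_of_constraints n3 hx hy X01 total deg cosub.
  by split=> //; [apply/(bound true hz hw) | apply/(bound false hz hw)].
- case=> hz hw nx ny.
  have [total deg sub cosub] := constraints_of_decomposition n3 hx hy X01 hz hw.
  by do !split=> //; [apply/(bound true hz hw) | apply/(bound false hz hw)].
Qed.
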